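(* Let $G=(V,E)$ be a connected graph and $1\le k\le |V|$. Let $D\subseteq V$ be such that every $v\in D$ is dominated by some $u\in V\setminus D$, and $|V\setminus D|\ge k$. Let $S\subseteq V\setminus D$ with $|S|=k$ be a local optimum with respect to swaps restricted to $V\setminus D$, i.e. for all $s\in S$ and all $o\in (V\setminus D)\setminus S$ we have $f((S\setminus\{s\})\cup\{o\})\ge f(S)$. Then $$f(S)\le 5\cdot \min\{f(T): T\subseteq V,\ |T|=k\},$$ equivalently $c(S)\ge \tfrac15\max\{c(T):T\subseteq V,\ |T|=k\}$.
   Context: Graphs are finite, undirected, unweighted, without self-loops, connected. $\mathrm{dist}$ is the shortest-path distance, $\mathrm{dist}(u,S)=\min_{s\in S}\mathrm{dist}(u,s)$, group farness $f(S)=\sum_{u\in V}\mathrm{dist}(u,S)$, and group closeness $c(S)=(|V|-|S|)/f(S)$. $N[v]$ is the closed neighborhood of $v$, and $u$ dominates $v$ if $N[v]\subseteq N[u]$. *)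

From mathcomp Require Import all_boot all_order.
Set Implicit Arguments. Unset Strict Implicit. Unset Printing Implicit Defensive.

Section Graph.
Variable T : finType.
Variable e : rel T.

Definition simple_graph := symmetric e /\ irreflexive e.
Definition connected_graph := forall u v : T, connect e u v.

Definition closed_nbhd (v : T) : {set T} := [set w | (w == v) || e v w].
Definition dominates (u v : T) : bool := closed_nbhd v \subset closed_nbhd u.

Fixpoint ball (n : nat) (u : T) : {set T} :=
  match n with
  | 0 => [set u]
  | n'.+1 => \bigcup_(w in ball n' u) closed_nbhd w
  end.

(* shortest-path distance: least n with v in ball n u (distances in a
   connected graph are < #|T|; returns #|T| if v is unreachable) *)
Definition dist (u v : T) : nat := find (fun n => v \in ball n u) (iota 0 #|T|).

(* dist(u,S) = min_{s in S} dist(u,s) (S assumed nonempty where used) *)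
Definition dist_set (u : T) (S : {set T}) : nat := \big[minn/#|T|]_(s in S) dist u s.

Definition farness (S : {set T}) : nat := \sum_(u : T) dist_set u S.

End Graph.

(* First, an optimal set can be moved out of [D]: swapping a vertex [v] of
   [D] for a vertex [u] dominating it (or, if [u] is already taken, for any free vertex
   outside [D]) does not increase farness, since every shortest path into [v] can be
   redirected into [u].  Second, the group farness is the k-median objective on the
   metric space of graph distances, and [S] is a swap local optimum against such a set
   [O], so the analysis of Arya et al. applies: pair every [o] in [O] with a vertex of
   [S] swapped out for it, each used at most twice; summing the swap inequalities
   gives [f(S) <= f(O) + 2 * 2 f(O)]. *)

From mathcomp Require Import all_boot all_order zify.
Set Implicit Arguments. Unset Strict Implicit. Unset Printing Implicit Defensive.

Section Distance.
Variable T : finType.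
Variable e : rel T.
Hypothesis e_sym : symmetric e.

Local Notation d := (dist e).
Local Notation ds := (dist_set e).

Lemma closed_nbhdC u v : (v \in closed_nbhd e u) = (u \in closed_nbhd e v).
Proof. by rewrite !inE eq_sym e_sym. Qed.

Lemma closed_nbhd_refl u : u \in closed_nbhd e u.
Proof. by rewrite !inE eqxx. Qed.

Lemma ball0 u v : (v \in ball e 0 u) = (v == u).
Proof. by rewrite inE. Qed.

Lemma ballS n u v :
  (v \in ball e n.+1 u) = [exists w, (w \in ball e n u) && (v \in closed_nbhd e w)].
Proof.
by apply/bigcupP/existsP => [[w Hw Hv]|[w /andP[Hw Hv]]]; exists w => //; apply/andP.
Qed.

Lemma ball1 u v : (v \in ball e 1 u) = (v \in closed_nbhd e u).
Proof.
rewrite ballS; apply/existsP/idP => [[w]|Hv]; first by rewrite ball0 => /andP[/eqP ->].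
by exists u; rewrite ball0 eqxx.
Qed.

Lemma ball_add m n u v w :
  v \in ball e m u -> w \in ball e n v -> w \in ball e (m + n) u.
Proof.
move=> Hv; elim: n w => [|n IH] w; first by rewrite ball0 addn0 => /eqP ->.
rewrite ballS addnS ballS => /existsP[w' /andP[Hw' Hw]].
by apply/existsP; exists w'; rewrite Hw (IH _ Hw').
Qed.

Lemma ballC n u v : v \in ball e n u -> u \in ball e n v.
Proof.
elim: n u v => [|n IH] u v; first by rewrite !ball0 eq_sym.
rewrite ballS => /existsP[w /andP[Hw Hv]].
have Hvw : w \in ball e 1 v by rewrite ball1 -closed_nbhdC.
by rewrite -add1n (ball_add Hvw (IH _ _ Hw)).
Qed.

Lemma dist_le_card u v : d u v <= #|T|.
Proof. by apply: leq_trans (find_size _ _) _; rewrite size_iota. Qed.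

Lemma dist_le n u v : v \in ball e n u -> d u v <= n.
Proof.
move=> Hv; have [Hn|Hn] := ltnP n #|T|; last exact: leq_trans (dist_le_card u v) Hn.
rewrite leqNgt; apply/negP => /(before_find 0).
by rewrite nth_iota // add0n Hv.
Qed.

Lemma mem_ball_dist u v : d u v < #|T| -> v \in ball e (d u v) u.
Proof.
move=> Hlt; have Hhas : has (fun n => v \in ball e n u) (iota 0 #|T|).
  by rewrite has_find size_iota.
by have := nth_find 0 Hhas; rewrite nth_iota // add0n.
Qed.

Lemma dist_xx u : d u u = 0.
Proof. by apply/eqP; rewrite -leqn0 dist_le // ball0. Qed.

Lemma dist_eq0 u v : d u v = 0 -> u = v.
Proof.
move=> H0; have Hlt : d u v < #|T| by rewrite H0; apply/card_gt0P; exists u.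
by move: (mem_ball_dist Hlt); rewrite H0 ball0 => /eqP.
Qed.

Lemma dist_triangle u v w : d u w <= d u v + d v w.
Proof.
have [Huv|Huv] := ltnP (d u v) #|T|; last first.
  exact: leq_trans (dist_le_card u w) (leq_trans Huv (leq_addr _ _)).
have [Hvw|Hvw] := ltnP (d v w) #|T|; last first.
  exact: leq_trans (dist_le_card u w) (leq_trans Hvw (leq_addl _ _)).
exact/dist_le/(ball_add (mem_ball_dist Huv) (mem_ball_dist Hvw)).
Qed.

Lemma distC u v : d u v = d v u.
Proof.
suff le_dist x y : d y x <= d x y by apply/eqP; rewrite eqn_leq !le_dist.
have [Hxy|Hxy] := ltnP (d x y) #|T|; last exact: leq_trans (dist_le_card y x) Hxy.
exact/dist_le/ballC/mem_ball_dist.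
Qed.

Lemma dist_closed_nbhd u v : v \in closed_nbhd e u -> d u v <= 1.
Proof. by move=> Hv; apply: dist_le; rewrite ball1. Qed.

(* A shortest path from x to v enters v through N[v], which lies in N[u]. *)
Lemma dist_dominates u v x : dominates e u v -> x != v -> d x u <= d x v.
Proof.
move=> Huv Hxv; have [Hlt|Hge] := ltnP (d x v) #|T|; last first.
  exact: leq_trans (dist_le_card x u) Hge.
move: (mem_ball_dist Hlt); case: (d x v) => [|n]; first by rewrite ball0 eq_sym (negbTE Hxv).
rewrite ballS => /existsP[w /andP[Hw Hvw]].
apply/dist_le; rewrite ballS; apply/existsP; exists w; rewrite Hw closed_nbhdC.
by apply: (subsetP Huv); rewrite -closed_nbhdC.
Qed.

Lemma dist_set_le u (S : {set T}) s : s \in S -> ds u S <= d u s.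
Proof.
rewrite /dist_set; elim: (index_enum T) (mem_index_enum s) => // a r IH.
rewrite inE big_cons => /orP[/eqP <- ->|/IH le_r Hs]; first by rewrite geq_minl.
by case: (a \in S); rewrite ?geq_min le_r ?orbT.
Qed.

Lemma dist_set_le_card u (S : {set T}) : ds u S <= #|T|.
Proof.
apply: (big_ind (fun m => m <= #|T|)) => // [x y Hx _|s _]; first by rewrite geq_min Hx.
exact: dist_le_card.
Qed.

Lemma dist_set_ge u (S : {set T}) n :
  n <= #|T| -> (forall s, s \in S -> n <= d u s) -> n <= ds u S.
Proof.
by move=> Hn Hs; apply: (big_ind (fun m => n <= m)) => // x y Hx Hy; rewrite leq_min Hx.
Qed.

Lemma dist_set_subset u (S S' : {set T}) : S \subset S' -> ds u S' <= ds u S.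
Proof.
move=> HS; apply: dist_set_ge => [|s Hs]; first exact: dist_set_le_card.
exact/dist_set_le/(subsetP HS).
Qed.

Lemma dist_set_mem u (S : {set T}) : u \in S -> ds u S = 0.
Proof. by move=> Hu; apply/eqP; rewrite -leqn0 -(dist_xx u) dist_set_le. Qed.

Lemma dist_set_gt0 u (S : {set T}) : u \notin S -> 0 < ds u S.
Proof.
move=> Hu; apply: dist_set_ge => [|s Hs]; first by apply/card_gt0P; exists u.
by rewrite lt0n; apply/eqP => /dist_eq0 Eus; rewrite Eus Hs in Hu.
Qed.

Lemma farness_subset (S S' : {set T}) : S \subset S' -> farness e S' <= farness e S.
Proof. by move=> HS; apply: leq_sum => u _; apply: dist_set_subset. Qed.

Lemma exists_nearest (S : {set T}) : S != set0 ->
  exists near : T -> T, forall j, near j \in S /\ ds j S = d j (near j).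
Proof.
case/set0Pn => s0 Hs0; exists (fun j => [arg min_(s < s0 in S) d j s]) => j.
case: arg_minnP => // s Hs Hmin; split => //.
by apply/eqP; rewrite eqn_leq dist_set_le //= dist_set_ge ?dist_le_card.
Qed.

End Distance.

Section Domination.
Variable T : finType.
Variable e : rel T.
Hypothesis e_sym : symmetric e.

Local Notation ds := (dist_set e).

(* Only [v] can get farther away; it loses at most 1, while [w] gains at least 1. *)
Lemma farness_swap_dominated (Ts : {set T}) u v w :
  v \in Ts -> w \notin Ts -> u \in w |: (Ts :\ v) -> dominates e u v -> u != v ->
  farness e (w |: (Ts :\ v)) <= farness e Ts.
Proof.
move=> Hv Hw Hu Huv Hneq; set Ts' := w |: (Ts :\ v).
have Hwv : w != v by apply: contraNneq Hw => ->.
have near_v : ds v Ts' <= 1.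
  apply: leq_trans (dist_set_le _ _ Hu) _; rewrite distC //.
  by apply: dist_closed_nbhd; apply: (subsetP Huv); apply: closed_nbhd_refl.
have near_w : ds w Ts' = 0 by apply/dist_set_mem/setU11.
have far_w := dist_set_gt0 e Hw.
have others x : x != v -> ds x Ts' <= ds x Ts.
  move=> Hxv; apply: dist_set_ge => [|t Ht]; first exact: dist_set_le_card.
  have [-> | Htv] := eqVneq t v.
    exact: leq_trans (dist_set_le _ _ Hu) (dist_dominates e_sym Huv Hxv).
  by apply: dist_set_le; rewrite setU1r // !inE Htv.
rewrite /farness (bigD1 v) //= [X in _ <= X](bigD1 v) //= (dist_set_mem _ Hv).
rewrite !(bigD1 w Hwv) /= near_w.
have : \sum_(x | (x != v) && (x != w)) ds x Ts' <= \sum_(x | (x != v) && (x != w)) ds x Ts.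
  by apply: leq_sum => x /andP[Hxv _]; apply: others.
lia.
Qed.

Variable D : {set T}.
Hypothesis D_dominated : forall v, v \in D -> exists2 u, u \in ~: D & dominates e u v.

(* Replace [v] by its dominator [u], or by any vertex outside [D] if [u] is already in [Ts]. *)
Lemma farness_swap_out_step (Ts : {set T}) v :
  #|Ts| <= #|~: D| -> v \in Ts :&: D ->
  exists Ts' : {set T},
    [/\ #|Ts'| = #|Ts|, Ts' :&: D \proper Ts :&: D & farness e Ts' <= farness e Ts].
Proof.
move=> HTs /setIP[Hv HvD]; have [u HuD Huv] := D_dominated HvD.
have Hneq : u != v by apply: contraTneq HuD => ->; rewrite inE HvD.
have [w [Hw HwD Hu]] : exists w, [/\ w \notin Ts, w \in ~: D & u \in w |: (Ts :\ v)].
  have [HuTs|HuTs] := boolP (u \in Ts); last by exists u; rewrite setU11.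
  have [w /setDP[HwD Hw]] : exists w, w \in ~: D :\: Ts.
    apply/set0Pn; apply: contraTneq HTs => /eqP; rewrite setD_eq0 => HDTs.
    by rewrite -ltnNge proper_card //; apply/properP; split=> //; exists v; rewrite ?inE ?HvD.
  by exists w; rewrite setU1r // !inE Hneq HuTs.
have HwD' : w \notin D by rewrite inE in HwD.
have HsetI : (w |: (Ts :\ v)) :&: D = (Ts :&: D) :\ v.
  apply/setP => x; rewrite !inE; have [-> | _] /= := eqVneq x w.
    by rewrite (negbTE Hw) (negbTE HwD') !andbF.
  by rewrite -andbA andbCA.
exists (w |: (Ts :\ v)); split.
- by rewrite cardsU1 in_setD1 (negbTE Hw) andbF (cardsD1 v Ts) Hv.
- by rewrite HsetI properD1 // inE Hv HvD.
- exact: farness_swap_dominated Hneq.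
Qed.

Lemma farness_out_of_dominated (Ts : {set T}) :
  #|Ts| <= #|~: D| ->
  exists2 Ts' : {set T}, Ts' \subset ~: D & #|Ts'| = #|Ts| /\ farness e Ts' <= farness e Ts.
Proof.
have [n] := ubnP #|Ts :&: D|; elim: n Ts => // n IH Ts HnD HTs.
have [HD0|[v Hv]] := set_0Vmem (Ts :&: D).
  exists Ts => //; apply/subsetP => x Hx; rewrite inE.
  by apply: contraT; rewrite negbK => HxD; rewrite -(in_set0 x) -HD0 inE Hx.
have [Ts1 [HTs1 Hproper Hfar]] := farness_swap_out_step HTs Hv.
have Hlt : #|Ts1 :&: D| < n by have := proper_card Hproper; lia.
have [|Ts' HTs' [Hcard Hfar']] := IH Ts1 Hlt; first by rewrite HTs1.
by exists Ts' => //; rewrite Hcard HTs1; split=> //; apply: leq_trans Hfar.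
Qed.

End Domination.

Lemma card_set_in_sum (I : finType) (A : {set I}) (P : pred I) :
  #|[set i in A | P i]| = \sum_(i in A) P i.
Proof. by rewrite -sum1dep_card big_mkcondr; apply: eq_bigr => i _; case: (P i). Qed.

Lemma sum_comp_fiber (I J : finType) (A : {set I}) (B : {set J}) (p : I -> J) (h : J -> nat) :
  {in A, forall i, p i \in B} ->
  \sum_(i in A) h (p i) = \sum_(j in B) #|[set i in A | p i == j]| * h j.
Proof.
move=> pAB; rewrite (partition_big p (mem B)) //=; apply: eq_bigr => j _.
rewrite (eq_bigr (fun=> h j)) => [|i /andP[_ /eqP ->]] //.
by rewrite sum_nat_const; congr (_ * _); apply: eq_card => i; rewrite !inE.
Qed.

Lemma exists_inj_in (I J : finType) (A : {set I}) (B : {set J}) (b0 : J) :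
  #|A| <= #|B| -> exists2 f : I -> J, {in A &, injective f} & {in A, forall i, f i \in B}.
Proof.
move=> leAB; have lt_index i : i \in A -> index i (enum A) < size (enum B).
  by move=> Ai; rewrite -cardE (leq_trans _ leAB) // cardE index_mem mem_enum.
exists (fun i => nth b0 (enum B) (index i (enum A))) => [i j Ai Aj /eqP|i Ai].
  rewrite nth_uniq ?enum_uniq ?lt_index // => /eqP.
  by apply: (index_inj i); rewrite mem_enum.
by rewrite -mem_enum mem_nth ?lt_index.
Qed.

(* The pairing of the k-median local search analysis (Arya et al.): every optimal
   centre [o] is matched with a centre of [S] that captures no optimal centre other
   than [o], and no centre of [S] is used more than twice. *)
Section SwapPairing.
Variables (I J : finType) (O : {set I}) (S : {set J}) (near : I -> J).
Hypothesis near_in : {in O, forall o, near o \in S}.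
Hypothesis card_O : #|O| <= #|S|.

Local Notation captured s := #|[set o in O | near o == s]|.
Local Notation shared := [set o in O | captured (near o) != 1].
Local Notation unused := [set s in S | captured s == 0].

Lemma card_shared : #|shared| <= #|setX unused [set: bool]|.
Proof.
rewrite cardsX cardsT card_bool muln2 -mul2n.
have cardO : #|O| = \sum_(s in S) captured s * 1.
  by rewrite -sum1_card (sum_comp_fiber (fun=> 1) near_in).
have cardS : #|S| = \sum_(s in S) 1 by rewrite sum1_card.
rewrite !card_set_in_sum (sum_comp_fiber (fun s => captured s != 1 : nat) near_in).
have : \sum_(s in S) (captured s * (captured s != 1) + 2 * 1)
       <= \sum_(s in S) (2 * (captured s == 0) + 2 * (captured s * 1)).
  by apply: leq_sum => s _; case: (captured s) => [|[|c]] /=; lia.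
rewrite !big_split /= -!big_distrr /= -cardO -cardS big1_eq; lia.
Qed.

Variable f : I -> J * bool.
Hypothesis f_inj : {in shared &, injective f}.
Hypothesis f_unused : {in shared, forall o, f o \in setX unused [set: bool]}.

Definition pairing o := if o \in shared then (f o).1 else near o.

Lemma pairing_shared o : o \in shared -> pairing o \in S /\ captured (pairing o) = 0.
Proof.
by move=> Ho; rewrite /pairing Ho; move: (f_unused Ho); rewrite !inE => /andP[/andP[-> /eqP]].
Qed.

Lemma pairing_in : {in O, forall o, pairing o \in S}.
Proof.
move=> o Ho; have [/pairing_shared[] // | Hsh] := boolP (o \in shared).
by rewrite /pairing (negbTE Hsh) near_in.
Qed.

Lemma pairing_captures_only : {in O &, forall o o', near o' = pairing o -> o' = o}.
Proof.
move=> o o' Ho Ho' Eo'; have [Hsh | Hsh] := boolP (o \in shared).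
  have [_ /cards0_eq E0] := pairing_shared Hsh.
  by have := in_set0 o'; rewrite -E0 inE Ho' Eo' eqxx.
rewrite /pairing (negbTE Hsh) in Eo'.
move: Hsh; rewrite inE Ho negbK => /cards1P[x Ex].
have : o \in [set y in O | near y == near o] by rewrite inE Ho eqxx.
have : o' \in [set y in O | near y == near o] by rewrite inE Ho' Eo' eqxx.
by rewrite Ex !inE => /eqP -> /eqP ->.
Qed.

Lemma card_pairing_fiber s : #|[set o in O | pairing o == s]| <= 2.
Proof.
set F := [set o in O | pairing o == s]; rewrite -(cardsID shared F).
have unshared_le1 : #|F :\: shared| <= 1.
  apply/card_le1_eqP => o o' /setDP[Fo _] /setDP[Fo' Hsh'].
  move: Fo Fo'; rewrite !inE => /andP[Ho /eqP Es] /andP[Ho' /eqP Es'].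
  by apply: pairing_captures_only => //; rewrite Es -Es' /pairing (negbTE Hsh').
have [E0|[o1 /setIP[Fo1 Hsh1]]] := set_0Vmem (F :&: shared).
  by rewrite E0 cards0 (leq_trans unshared_le1).
move: Fo1; rewrite inE => /andP[Ho1 /eqP Es].
have [_] := pairing_shared Hsh1; rewrite Es => /cards0_eq Ecap.
have -> : F :\: shared = set0.
  apply/setP => o; rewrite in_set0; apply/negP => /setDP[Fo Hsh].
  move: Fo; rewrite inE /pairing (negbTE Hsh) => /andP[Ho /eqP Eo].
  by have := in_set0 o; rewrite -Ecap inE Ho Eo eqxx.
have Himg : f @: (F :&: shared) \subset [set (s, true); (s, false)].
  apply/subsetP => _ /imsetP[o /setIP[Fo Hsh] ->].
  move: Fo; rewrite inE /pairing Hsh => /andP[_ /eqP].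
  by case: (f o) => a [|] /= ->; rewrite !inE eqxx ?orbT.
rewrite cards0 addn0 -(card_in_imset (sub_in2 _ f_inj)) => [|o]; last by case/setIP.
by apply: leq_trans (subset_leq_card Himg) _; rewrite cards2 ltnS leq_b1.
Qed.

End SwapPairing.

Lemma exists_swap_pairing (I J : finType) (O : {set I}) (S : {set J}) (near : I -> J) :
  {in O, forall o, near o \in S} -> #|O| <= #|S| ->
  exists pi : I -> J, [/\ {in O, forall o, pi o \in S},
    {in O &, forall o o', near o' = pi o -> o' = o} &
    forall s, #|[set o in O | pi o == s]| <= 2].
Proof.
move=> near_in card_O; have [O0 | [o0 Ho0]] := set_0Vmem O.
  exists near; split=> [o|o o'|s]; rewrite O0 ?inE //.
  by rewrite (_ : [set o in set0 | _] = set0) ?cards0 //; apply/setP => o; rewrite !inE.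
have [f f_inj f_unused] := exists_inj_in (near o0, true) (card_shared near_in card_O).
exists (pairing O near f); split.
- exact: (pairing_in near_in f_unused).
- exact: pairing_captures_only f_unused.
- exact: card_pairing_fiber f_inj f_unused.
Qed.

Section LocalSearch.
Variable T : finType.
Variable e : rel T.
Hypothesis e_sym : symmetric e.

Local Notation d := (dist e).
Local Notation ds := (dist_set e).

Variables (S O : {set T}) (near_S near_O : T -> T).
Hypothesis near_S_spec : forall j, near_S j \in S /\ ds j S = d j (near_S j).
Hypothesis near_O_spec : forall j, near_O j \in O /\ ds j O = d j (near_O j).

(* Clients of [o] move to [o]; a client [j] of [s] with
   [o' := near_O j] moves to [near_S o'], which survives because [s] captures no
   optimal centre but [o], and is at distance [<= d j o' + d o' s <= 2 d j o' + d j s]. *)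
Lemma dist_set_swap s o j : s \in S ->
  {in O, forall o', near_S o' = s -> o' = o} ->
  ds j (o |: (S :\ s)) <=
    (if near_O j == o then ds j O else ds j S) + (if near_S j == s then 2 * ds j O else 0).
Proof.
move=> Hs captures_only; set S' := o |: (S :\ s).
have [HjS EjS] := near_S_spec j; have [HjO EjO] := near_O_spec j.
have [Ejo | Njo] := eqVneq (near_O j) o.
  by rewrite EjO Ejo (leq_trans (dist_set_le _ _ (setU11 o _))) ?leq_addr.
have [Ejs | Njs] := eqVneq (near_S j) s; last first.
  by rewrite addn0 EjS dist_set_le // setU1r // !inE Njs HjS.
set o' := near_O j in Njo EjO HjO *.
have [Ho'S Eo'S] := near_S_spec o'.
have Nso : near_S o' != s by apply: contraNneq Njo => /(captures_only _ HjO) ->.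
have Ho'S' : near_S o' \in S' by rewrite setU1r // !inE Nso Ho'S.
have le_o's : d o' (near_S o') <= d o' s by rewrite -Eo'S dist_set_le.
have tri1 := dist_triangle e j o' (near_S o').
have tri2 := dist_triangle e o' j s.
rewrite (distC e_sym o' j) in tri2.
rewrite EjS EjO Ejs; apply: leq_trans (dist_set_le _ _ Ho'S') _; lia.
Qed.

Lemma farness_swap s o : s \in S ->
  {in O, forall o', near_S o' = s -> o' = o} ->
  farness e (o |: (S :\ s)) + \sum_(j | near_O j == o) ds j S <=
    farness e S + \sum_(j | near_O j == o) ds j O + \sum_(j | near_S j == s) 2 * ds j O.
Proof.
move=> Hs captures_only; rewrite /farness !(big_mkcond (fun j => _ == _)) -!big_split /=.
apply: leq_sum => j _; have := dist_set_swap j Hs captures_only.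
by case: (near_O j == o); case: (near_S j == s); lia.
Qed.

End LocalSearch.

Lemma farness_local_opt (T : finType) (e : rel T) (S O : {set T}) :
  symmetric e -> O != set0 -> #|O| <= #|S| ->
  (forall s o, s \in S -> o \in O -> farness e S <= farness e (o |: (S :\ s))) ->
  farness e S <= 5 * farness e O.
Proof.
move=> e_sym O0 card_O local_opt.
have S0 : S != set0 by rewrite -card_gt0 (leq_trans _ card_O) // card_gt0.
have [near_S near_S_spec] := exists_nearest e S0.
have [near_O near_O_spec] := exists_nearest e O0.
have near_S_in : {in O, forall o, near_S o \in S} by move=> o _; case: (near_S_spec o).
have [pi [pi_in captures_only card_fiber]] := exists_swap_pairing near_S_in card_O.
pose cost s := \sum_(j | near_S j == s) 2 * dist_set e j O.
have per_o o : o \in O ->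
    \sum_(j | near_O j == o) dist_set e j S
      <= \sum_(j | near_O j == o) dist_set e j O + cost (pi o).
  move=> Ho; have := local_opt _ _ (pi_in o Ho) Ho.
  have := farness_swap e_sym near_S_spec near_O_spec (pi_in o Ho) (fun o' => captures_only o o' Ho).
  by rewrite /cost; lia.
have partition X : farness e X = \sum_(o in O) \sum_(j | near_O j == o) dist_set e j X.
  by rewrite /farness (partition_big near_O (mem O)) // => j _; case: (near_O_spec j).
have cost_S : \sum_(s in S) cost s = 2 * farness e O.
  rewrite /cost /farness big_distrr [RHS](partition_big near_S (mem S)) //= => j _.
  by case: (near_S_spec j).
have cost_pi : \sum_(o in O) cost (pi o) <= 2 * \sum_(s in S) cost s.
  rewrite (sum_comp_fiber cost pi_in) big_distrr; apply: leq_sum => s _.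
  exact: leq_mul (card_fiber s) (leqnn _).
have : farness e S <= farness e O + \sum_(o in O) cost (pi o).
  by rewrite !partition -big_split; apply: leq_sum => o Ho; apply: per_o.
lia.
Qed.

Theorem mainTheorem3 (T : finType) (e : rel T) (k : nat) (D S : {set T}) :
  simple_graph e -> connected_graph e ->
  1 <= k <= #|T| ->
  (forall v, v \in D -> exists2 u, u \in ~: D & dominates e u v) ->
  k <= #|~: D| ->
  S \subset ~: D -> #|S| = k ->
  (forall s o, s \in S -> o \in ~: D -> o \notin S ->
     farness e S <= farness e (o |: (S :\ s))) ->
  forall Tset : {set T}, #|Tset| = k -> farness e S <= 5 * farness e Tset.
Proof.
move=> [e_sym _] _ /andP[k_gt0 _] D_dominated card_D _ card_S local_opt Tset card_T.
have [|O O_out [card_O far_O]] := farness_out_of_dominated e_sym D_dominated (Ts := Tset).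
  by rewrite card_T.
apply: leq_trans (_ : 5 * farness e O <= _); last by rewrite leq_mul2l far_O orbT.
apply: farness_local_opt => // [|| s o Hs Ho].
- by rewrite -card_gt0 card_O card_T.
- by rewrite card_O card_T card_S.
- have [HoS | HoS] := boolP (o \in S); last exact: local_opt (subsetP O_out o Ho) HoS.
  apply: farness_subset; apply/subsetP => x.
  by rewrite !inE => /orP[/eqP -> | /andP[_ ->]].
Qed.
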